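(* In the setting below, for all $i,j=1,\dots,N$, every unit vector $v\in\mathbb{R}^d$ and every $n\in\mathbb{N}_0$, $$\langle x_i(t)-x_j(t),v\rangle\le e^{-K(t-\bar t)}\langle x_i(\bar t)-x_j(\bar t),v\rangle+\big(1-e^{-K(t-\bar t)}\big)d(t_{2n})$$ for all $t_{2n+1}\ge t\ge\bar t\ge t_{2n}$.
   Context: Setting: $N\ge2$; $\psi:\mathbb{R}^d\times\mathbb{R}^d\to\mathbb{R}$ positive, bounded, continuous, $K:=\|\psi\|_\infty$; $\{t_n\}_{n\in\mathbb{N}_0}$ increasing, nonnegative, $t_0=0$, $t_n\to\infty$; $\alpha(0)=1$, $\alpha=1$ on $(t_{2n},t_{2n+1})$, $\alpha=-1$ on $[t_{2n+1},t_{2n+2}]$; $\{x_i\}$ solves $x_i'(t)=\frac1{N-1}\sum_{j\ne i}\alpha(t)\psi(x_i(t),x_j(t))(x_j(t)-x_i(t))$, $t>0$, $x_i(0)=x_i^0\in\mathbb{R}^d$ (continuous, $C^1$ on each $(t_n,t_{n+1})$). $d(t):=\max_{i,j}|x_i(t)-x_j(t)|$. Standing assumptions: $t_{2n+2}-t_{2n+1}<\frac{\ln 2}{K}$ for all $n$; $\sum_{p\ge0}\ln\frac{e^{K(t_{2p+2}-t_{2p+1})}}{2-e^{K(t_{2p+2}-t_{2p+1})}}<\infty$; $\sum_{p\ge0}\ln\max\{1-e^{-K(t_{2p+1}-t_{2p})},1-\frac{\psi_0}{K}(1-e^{-K(t_{2p+1}-t_{2p})})\}=-\infty$, with $\psi_0=\min_{|y|,|z|\le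 M^0}\psi(y,z)$, $M^0=e^{K\sum_{p}(t_{2p+2}-t_{2p+1})}\max_i|x_i^0|$. *)

From HB Require Import structures.
From mathcomp Require Import all_boot all_order all_algebra.
From mathcomp Require Import all_classical all_reals all_analysis.
Set Implicit Arguments. Unset Strict Implicit. Unset Printing Implicit Defensive.
Import Order.TTheory GRing.Theory Num.Theory.
Import numFieldNormedType.Exports.
Local Open Scope ring_scope.

(* Euclidean inner product and Euclidean norm on R^d (the library's norm on
   'rV is the sup norm, so we define the Euclidean ones explicitly). *)
Definition dotv (R : realType) (d : nat) (u v : 'rV[R]_d) : R :=
  \sum_(k < d) u 0 k * v 0 k.
Definition enorm (R : realType) (d : nat) (u : 'rV[R]_d) : R :=
  Num.sqrt (dotv u u).

Definition alpha (R : realType) (ts : nat -> R) (t : R) : R :=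
  if `[< exists n : nat, ts n.*2.+1 <= t <= ts n.*2.+2 >] then -1 else 1.

Definition diam (R : realType) (N d : nat) (x : 'I_N -> R -> 'rV[R]_d) (t : R) : R :=
  \big[Num.max/0]_(i < N) \big[Num.max/0]_(j < N) enorm (x i t - x j t).

Definition rhs (R : realType) (N d : nat) (ts : nat -> R)
  (psi : 'rV[R]_d -> 'rV[R]_d -> R) (x : 'I_N -> R -> 'rV[R]_d) (i : 'I_N) (t : R)
  : 'rV[R]_d :=
  (N.-1%:R)^-1 *: \sum_(j < N | j != i)
     (alpha ts t * psi (x i t) (x j t)) *: (x j t - x i t).

(* On an attractive phase [t_{2n}, t_{2n+1}] (where alpha = 1) the projections
   y_k = <x_k, v> satisfy y_k' = (N-1)^-1 sum_(l <> k) psi (y_l - y_k).  By a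
   maximum principle, max_k y_k cannot increase and min_k y_k cannot decrease, so
   all y_k stay in an interval of length at most d(t_{2n}).  Bounding psi by K
   then gives (y_i - y_j)' <= K (d(t_{2n}) - (y_i - y_j)), which Gronwall's
   inequality integrates to the claimed estimate. *)

From HB Require Import structures.
From mathcomp Require Import all_boot all_order all_algebra.
From mathcomp Require Import all_classical all_reals all_analysis.
From mathcomp Require Import ring lra.
Import Order.TTheory GRing.Theory Num.Theory.
Import numFieldNormedType.Exports.
Local Open Scope classical_set_scope.
Local Open Scope ring_scope.

Section InnerProduct.
Context {R : realType} {d : nat}.
Implicit Types u w v : 'rV[R]_d.

Lemma dotvD u w v : dotv (u + w) v = dotv u v + dotv w v.
Proof. by rewrite /dotv -big_split; apply: eq_bigr => k _; rewrite mxE mulrDl. Qed.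

Lemma dotv0 v : dotv 0 v = 0.
Proof. by rewrite /dotv big1 // => k _; rewrite mxE mul0r. Qed.

Lemma dotvZ c u v : dotv (c *: u) v = c * dotv u v.
Proof. by rewrite /dotv mulr_sumr; apply: eq_bigr => k _; rewrite mxE mulrA. Qed.

Lemma dotvN u v : dotv (- u) v = - dotv u v.
Proof. by rewrite -scaleN1r dotvZ mulN1r. Qed.

Lemma dotvB u w v : dotv (u - w) v = dotv u v - dotv w v.
Proof. by rewrite dotvD dotvN. Qed.

Lemma dotvNr u v : dotv u (- v) = - dotv u v.
Proof. by rewrite /dotv -sumrN; apply: eq_bigr => k _; rewrite mxE mulrN. Qed.

Lemma dotv_sum (I : finType) (P : pred I) (F : I -> 'rV[R]_d) v :
  dotv (\sum_(l | P l) F l) v = \sum_(l | P l) dotv (F l) v.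
Proof. by apply: (big_morph (fun u => dotv u v) (fun a b => dotvD a b v) (dotv0 v)). Qed.

Lemma dotv_ge0 v : 0 <= dotv v v.
Proof. by apply: sumr_ge0 => k _; rewrite -expr2 sqr_ge0. Qed.

Lemma dotv_le_enorm u v : enorm v = 1 -> dotv u v <= enorm u.
Proof.
move=> v1.
have vv : dotv v v = 1 by rewrite -(sqr_sqrtr (dotv_ge0 v)) -/(enorm v) v1 expr1n.
have sq_expand (c : R) : \sum_(k < d) (u 0 k - c * v 0 k) ^+ 2 =
    dotv u u - 2 * c * dotv u v + c ^+ 2 * dotv v v.
  rewrite /dotv !mulr_sumr -sumrB -big_split /=.
  by apply: eq_bigr => k _; ring.
have : 0 <= dotv u u - dotv u v ^+ 2.
  have : 0 <= \sum_(k < d) (u 0 k - dotv u v * v 0 k) ^+ 2.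
    by apply: sumr_ge0 => k _; exact: sqr_ge0.
  rewrite sq_expand vv; lra.
move=> cs; apply: le_trans (ler_norm _) _.
by rewrite -sqrtr_sqr /enorm ler_wsqrtr // -subr_ge0.
Qed.

Lemma is_derive_dotv (f : R -> 'rV[R]_d) (t : R) (df v : 'rV[R]_d) :
  is_derive t 1 f df -> is_derive t 1 (fun s => dotv (f s) v) (dotv df v).
Proof.
move=> fd.
have coord_d k : is_derive t 1 (fun s => f s 0 k) (df 0 k).
  have dk := (derivable_mxP f t 1).1 (@ex_derive _ _ _ _ _ _ _ fd) 0 k.
  apply: is_derive_eq (derivableP dk) _.
  by rewrite -(@derive_val _ _ _ _ _ _ _ fd) derive_mx ?mxE.
rewrite [X in is_derive _ _ X](_ : _ = \sum_(k < d) v 0 k \*: (fun s => f s 0 k)).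
  apply: is_derive_eq (is_derive_sum (fun k => is_deriveZ (v 0 k) (coord_d k))) _.
  by apply: eq_bigr => k _; rewrite mulrC.
by apply: funext => s; rewrite fct_sumE; apply: eq_bigr => k _; rewrite mulrC.
Qed.

Lemma continuous_dotv v : continuous (fun u : 'rV[R]_d => dotv u v).
Proof.
have -> : (fun u : 'rV[R]_d => dotv u v) = \sum_(k < d) (fun u => u 0 k * v 0 k).
  by apply: funext => w; rewrite fct_sumE.
move=> u; elim/big_ind: _ => [|f g|k _]; [exact: cst_continuous | exact: continuousD |].
by apply: continuousM; [exact: coord_continuous | exact: cst_continuous].
Qed.

End InnerProduct.

Section RealCalculus.
Context {R : realType}.
Implicit Types (a b c t : R) (f : R -> R).

Lemma derive_ge0_at_left_max f a c df :
  a < c -> is_derive c 1 f df -> (forall s, a < s < c -> f s <= f c) -> 0 <= df.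
Proof.
move=> ac fc fmax.
have fd : derivable f c 1 := @ex_derive _ _ _ _ _ _ _ fc.
rewrite -(@derive_val _ _ _ _ _ _ _ fc) ['D_1 f c]cvg_at_leftE //.
apply: limr_ge.
  rewrite -(cvg_at_leftE (fun h => h^-1 *: ((f \o shift c) _ - f c))) //.
  apply: cvg_trans fd; apply: cvg_app.
  move=> A [r r0 Ar]; exists r => // h hr h0; apply: Ar => //; exact: ltr0_neq0.
near=> h.
have h0 : h < 0 by near: h; exists 1 => /=.
have ah : a < h + c.
  near: h; exists (c - a); first by rewrite /= subr_gt0.
  by move=> h /=; rewrite distrC subr0 => /ltr_normlP[]; lra.
have := fmax (h + c); rewrite ah /= => /(_ ltac:(lra)) fhc.
rewrite /= [_%:A]mulr1 /GRing.scale /=.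
by rewrite mulr_le0 ?invr_le0 ?subr_le0 // ltW.
Unshelve. all: by end_near. Qed.

Lemma EVT_max_family {I : finType} (i0 : I) {g : I -> R -> R} {a b} :
  a <= b -> (forall l, {within `[a, b], continuous (g l)}) ->
  exists p, exists2 c, c \in `[a, b] & forall l s, s \in `[a, b] -> g l s <= g p c.
Proof.
move=> ab gc.
have /choice[cmax cmaxP] l : exists c, c \in `[a, b] /\ forall s, s \in `[a, b] -> g l s <= g l c.
  by have [c c1 c2] := EVT_max ab (gc l); exists c.
have [p _ pmax] := @arg_maxP _ _ _ i0 predT (fun l => g l (cmax l)) isT.
exists p, (cmax p); first exact: (cmaxP p).1.
by move=> l s sab; apply: le_trans ((cmaxP l).2 s sab) (pmax l isT).
Qed.

Lemma is_derive_mulrl k t : is_derive t 1 ( *%R k) k.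
Proof. exact: is_derive_eq (is_deriveZ k (is_derive_id t 1)) (mulr1 k). Qed.

Lemma max_principle (I : finType) (y dy : I -> R -> R) a b B :
  (forall k, {within `[a, b], continuous (y k)}) ->
  (forall k s, a < s < b -> is_derive s 1 (y k) (dy k s)) ->
  (forall k s, a < s < b -> (forall l, y l s <= y k s) -> dy k s <= 0) ->
  (forall k, y k a <= B) ->
  forall k t, a <= t < b -> y k t <= B.
Proof.
move=> yc yd dy_le0 yaB k t /andP[at_ tb].
(* Subtracting [e * s] makes an interior maximum incompatible with [dy <= 0]. *)
have slack e : 0 < e -> y k t - e * t <= B - e * a.
  move=> e0; pose g l s := y l s - e * s.
  have gc l : {within `[a, t], continuous (g l)}.
    move=> s; apply: continuousB; last first.
      exact/continuous_subspaceT/mulrl_continuous.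
    apply: continuous_subspaceW (yc l) s; apply: subset_itvl; rewrite bnd_simp ltW //.
  have [p [c]] := EVT_max_family k at_ gc.
  rewrite in_itv /= => /andP[ac ct] gmax.
  have gkt : g k t <= g p c by apply: gmax; rewrite in_itv /= at_ lexx.
  have [ca|ac'] := eqVneq c a.
    by move: gkt; rewrite /g ca => /le_trans; apply; rewrite lerD2r yaB.
  have {ac'} ac : a < c by rewrite lt_neqAle eq_sym ac' ac.
  have cab : a < c < b by rewrite ac (le_lt_trans ct tb).
  have : 0 <= dy p c - e.
    apply: (@derive_ge0_at_left_max (g p) a c _ ac).
      by apply: is_deriveB; [exact: yd | exact: is_derive_mulrl].
    by move=> s /andP[sa sc]; apply: gmax; rewrite in_itv /= ltW //= (le_trans (ltW sc)).
  have : dy p c <= 0.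
    apply: dy_le0 => // l.
    by have := gmax l c; rewrite in_itv /= (ltW ac) ct /g lerD2r => ->.
  lra.
apply/ler_addgt0Pr => e e0.
have [->|ta] := eqVneq t a; first by rewrite (le_trans (yaB k)) // lerDl ltW.
have ta' : 0 < t - a by rewrite subr_gt0 lt_def ta at_.
have := slack (e / (t - a)) (divr_gt0 e0 ta').
have : e / (t - a) * t - e / (t - a) * a = e by rewrite -mulrBr divfK ?gt_eqF.
lra.
Qed.

Lemma gronwall_affine (D dD : R -> R) (K d0 tb t : R) :
  tb <= t -> {within `[tb, t], continuous D} ->
  (forall s, tb < s < t -> is_derive s 1 D (dD s)) ->
  (forall s, tb < s < t -> dD s <= K * (d0 - D s)) ->
  D t <= expR (- K * (t - tb)) * D tb + (1 - expR (- K * (t - tb))) * d0.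
Proof.
move=> tbt Dc Dd Dle.
pose h s := expR (K * s) * (D s - d0).
have expd (s : R) : is_derive s 1 (fun s => expR (K * s)) (expR (K * s) * K).
  exact: (is_derive1_comp (is_derive_expR _) (is_derive_mulrl K s)).
have hd (s : R) : tb < s < t ->
    is_derive s 1 h (expR (K * s) * (dD s + K * (D s - d0))).
  move=> hs; apply: is_derive_eq.
    by apply: is_deriveM; apply: is_deriveB; exact: Dd.
  rewrite /GRing.scale /=; ring.
have hc : {within `[tb, t], continuous h}.
  move=> s; apply: (@continuousM _ _ (from_subspace _ (fun s => expR (K * s)))
                                      (from_subspace _ (fun s => D s - d0))).
    apply: continuous_subspaceT => r.
    apply: continuous_comp; [exact: mulrl_continuous | exact: continuous_expR].
  by apply: continuousB; [exact: Dc | exact: cst_continuous].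
have htb : h t <= h tb.
  have hle0 s : s \in `]tb, t[ -> derive1 h s <= 0.
    rewrite in_itv /= => sin; rewrite derive1E (@derive_val _ _ _ _ _ _ _ (hd s sin)).
    rewrite pmulr_rle0 ?expR_gt0 //; have := Dle s sin; lra.
  apply: (ler0_derive1_le_cc _ hle0 hc); rewrite ?in_itv /= ?lexx ?tbt //.
  by move=> s; rewrite in_itv /= => /hd hs; exact: (@ex_derive _ _ _ _ _ _ _ hs).
suff : D t - d0 <= expR (- K * (t - tb)) * (D tb - d0) by lra.
rewrite -(ler_pM2l (expR_gt0 (K * t))) mulrA -expRD.
by rewrite (_ : K * t + - K * (t - tb) = K * tb); [exact: htb | ring].
Qed.
End RealCalculus.

Lemma alpha_even_phase (R : realType) (ts : nat -> R) (n : nat) (s : R) :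
  (forall m, ts m < ts m.+1) -> ts n.*2 < s < ts n.*2.+1 -> alpha ts s = 1.
Proof.
move=> ts_lt /andP[s1 s2]; rewrite /alpha; case: asboolP => // -[m /andP[m1 m2]].
have ts_le := Order.NatMonotonyTheory.nondecnP (fun p => ltW (ts_lt p)).
have [mn|nm] := ltnP m n.
  have : ts m.*2.+2 <= ts n.*2 by apply: ts_le; rewrite leEnat -doubleS leq_double.
  lra.
have : ts n.*2.+1 <= ts m.*2.+1 by apply: ts_le; rewrite leEnat ltnS leq_double.
lra.
Qed.

Section AttractivePhase.
Variables (R : realType) (N d : nat) (psi : 'rV[R]_d -> 'rV[R]_d -> R) (K : R).
Variables (ts : nat -> R) (x : 'I_N -> R -> 'rV[R]_d) (a b : R).
Hypothesis psi_ge0 : forall y z, 0 <= psi y z.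
Hypothesis psi_le : forall y z, psi y z <= K.
Hypothesis alpha_attractive : forall s, a < s < b -> alpha ts s = 1.
Hypothesis x_cont : forall i, {within `[a, b], continuous (x i)}.
Hypothesis x_deriv : forall i s, a < s < b -> is_derive s 1 (x i) (rhs ts psi x i s).

Let K_ge0 : 0 <= K := le_trans (psi_ge0 0 0) (psi_le 0 0).

Lemma dotv_rhs_le k w s U : a < s < b -> (forall l, dotv (x l s) w <= U) ->
  dotv (rhs ts psi x k s) w <= K * (U - dotv (x k s) w).
Proof.
move=> sab xU; set gap := U - dotv (x k s) w.
have gap_ge0 : 0 <= gap by rewrite subr_ge0.
rewrite /rhs dotvZ dotv_sum.
apply: le_trans (_ : (N.-1%:R)^-1 * \sum_(l | l != k) K * gap <= _).
  apply: ler_wpM2l; first by rewrite invr_ge0 ler0n.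
  apply: ler_sum => l _; rewrite dotvZ dotvB alpha_attractive // mul1r.
  apply: le_trans (ler_wpM2r gap_ge0 (psi_le _ _)).
  by apply: ler_wpM2l; rewrite ?lerD2r.
rewrite (eq_bigl (mem (predC1 k))) => [|l]; last by rewrite !inE.
rewrite sumr_const cardC1 card_ord -(mulr_natr (K * gap)) mulrCA ler_piMr ?mulr_ge0 //.
(* for [N <= 1] the factor is [0^-1 * 0 = 0] *)
by have [->|N0] := eqVneq (N.-1%:R : R) 0; rewrite ?mulr0 ?mulVf.
Qed.

Lemma dotv_le_initial_max w U : (forall l, dotv (x l a) w <= U) ->
  forall k s, a <= s < b -> dotv (x k s) w <= U.
Proof.
move=> xaU; apply: (@max_principle _ _ (fun k s => dotv (x k s) w)
  (fun k s => dotv (rhs ts psi x k s) w) a b U _ _ _ xaU).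
- move=> k s; apply: (@continuous_comp _ _ _ _ (fun u => dotv u w)).
    exact: x_cont.
  exact: continuous_dotv.
- by move=> k s sab; apply: is_derive_dotv; exact: x_deriv.
- by move=> k s sab xmax; have := @dotv_rhs_le k w s _ sab xmax; rewrite subrr mulr0.
Qed.

Lemma dotv_sub_gronwall i j v tb t : enorm v = 1 -> a <= tb -> tb <= t -> t <= b ->
  dotv (x i t - x j t) v <=
    expR (- K * (t - tb)) * dotv (x i tb - x j tb) v
    + (1 - expR (- K * (t - tb))) * diam x a.
Proof.
move=> v1 atb tbt tb_le.
have [p _ pmax] := @arg_maxP _ _ _ i predT (fun l => dotv (x l a) v) isT.
have [q _ qmax] := @arg_maxP _ _ _ i predT (fun l => dotv (x l a) (- v)) isT.
have upper l s : a <= s < b -> dotv (x l s) v <= dotv (x p a) v.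
  by apply: dotv_le_initial_max => l'; exact: pmax.
have lower l s : a <= s < b -> dotv (x l s) (- v) <= dotv (x q a) (- v).
  by apply: dotv_le_initial_max => l'; exact: qmax.
have spread : dotv (x p a) v - dotv (x q a) v <= diam x a.
  rewrite -dotvB; apply: le_trans (dotv_le_enorm _ _ v1) _.
  rewrite /diam; apply: le_trans (le_bigmax _ _ p).
  exact: (le_bigmax _ (fun l => enorm (x p a - x l a)) q).
have sub : `[tb, t] `<=` `[a, b] by apply: subset_itv; rewrite bnd_simp.
apply: (@gronwall_affine _ (fun s => dotv (x i s - x j s) v)
  (fun s => dotv (rhs ts psi x i s) v - dotv (rhs ts psi x j s) v) _ _ _ _ tbt).
- move=> s; apply: (@continuous_comp _ _ _ (from_subspace _ (fun s => x i s - x j s))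
                                       (fun u => dotv u v)).
    by apply: continuousB; apply: continuous_subspaceW sub _ _.
  exact: continuous_dotv.
- move=> s /andP[tbs st].
  have sab : a < s < b by rewrite (le_lt_trans atb tbs) (lt_le_trans st tb_le).
  rewrite -dotvB; apply: is_derive_dotv.
  exact: is_deriveB (x_deriv i s sab) (x_deriv j s sab).
- move=> s /andP[tbs st].
  have sab : a < s < b by rewrite (le_lt_trans atb tbs) (lt_le_trans st tb_le).
  have sab' : a <= s < b by rewrite (ltW (le_lt_trans atb tbs)) (lt_le_trans st tb_le).
  have := @dotv_rhs_le i v s _ sab (fun l => upper l s sab').
  have := @dotv_rhs_le j (- v) s _ sab (fun l => lower l s sab').
  rewrite !dotvNr dotvB.
  have := ler_wpM2l K_ge0 spread.
  lra.
Qed.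
End AttractivePhase.

Theorem proposition3p10 (R : realType) (N d : nat)
  (psi : 'rV[R]_d -> 'rV[R]_d -> R) (K : R) (ts : nat -> R)
  (x : 'I_N -> R -> 'rV[R]_d) (psi0 : R) :
  (2 <= N)%N ->
  (* psi positive, bounded, continuous; K = sup psi *)
  (forall y z, 0 < psi y z) ->
  continuous (fun p : 'rV[R]_d * 'rV[R]_d => psi p.1 p.2) ->
  (forall y z, psi y z <= K) ->
  (forall e, 0 < e -> exists y z, K - e < psi y z) ->
  (* switching times *)
  ts 0%N = 0 ->
  (forall n, ts n < ts n.+1) ->
  ts @ \oo --> +oo ->
  (* the solution *)
  (forall i, {within `[0, +oo[, continuous (x i)}) ->
  (forall i n t, ts n < t < ts n.+1 -> is_derive t 1 (x i) (rhs ts psi x i t)) ->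
  (* standing assumptions *)
  (forall n, ts n.*2.+2 - ts n.*2.+1 < ln 2 / K) ->
  cvgn (series (fun p : nat =>
     ln (expR (K * (ts p.*2.+2 - ts p.*2.+1))
         / (2 - expR (K * (ts p.*2.+2 - ts p.*2.+1)))))) ->
  (let M0 := expR (K * limn (series (fun p : nat => ts p.*2.+2 - ts p.*2.+1)))
             * \big[Num.max/0]_(i < N) enorm (x i 0) in
   (exists y z, enorm y <= M0 /\ enorm z <= M0 /\ psi y z = psi0) /\
   (forall y z, enorm y <= M0 -> enorm z <= M0 -> psi0 <= psi y z)) ->
  series (fun p : nat =>
     ln (Num.max (1 - expR (- K * (ts p.*2.+1 - ts p.*2)))
                 (1 - psi0 / K * (1 - expR (- K * (ts p.*2.+1 - ts p.*2))))))
     @ \oo --> -oo ->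
  (* conclusion *)
  forall (i j : 'I_N) (v : 'rV[R]_d), enorm v = 1 ->
  forall (n : nat) (t tb : R), ts n.*2 <= tb -> tb <= t -> t <= ts n.*2.+1 ->
  dotv (x i t - x j t) v <=
    expR (- K * (t - tb)) * dotv (x i tb - x j tb) v
    + (1 - expR (- K * (t - tb))) * diam x (ts n.*2).
Proof.
move=> _ psi_gt0 _ psi_le _ ts0 ts_lt _ x_cont x_deriv _ _ _ _ i j v v1 n t tb.
have ts_ge0 : 0 <= ts n.*2.
  by rewrite -ts0; apply: (Order.NatMonotonyTheory.nondecnP (fun p => ltW (ts_lt p))).
move=> tb_ge t_ge t_le; apply: (@dotv_sub_gronwall _ _ _ psi K ts x _ (ts n.*2.+1)) => //.
- by move=> y z; exact: ltW.
- by move=> s; exact: alpha_even_phase.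
- move=> k; apply: continuous_subspaceW (x_cont k).
  by move=> s; rewrite /= !in_itv /= andbT => /andP[/(le_trans ts_ge0)].
Qed.
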